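(* $(\mathfrak{ss}_e^{\varepsilon})^\perp=\aleph_0$ for every $\varepsilon>0$.
   Context: Let $\mathfrak S_{cc}$ be the set of all sequences $\mathbf a=\langle a_i:i\in\omega\rangle$ of rational numbers with $a_i\to0$ such that $\sum_i a_i$ is conditionally convergent (converges to a real number, with the positive terms summing to $+\infty$ and the negative terms to $-\infty$). Let $[\omega]^\omega_\omega$ be the set of infinite coinfinite subsets of $\omega$; for such $X$ with increasing enumeration $\langle i_n\rangle$, $\sum_X\mathbf a$ denotes $\sum_n a_{i_n}$. For $\varepsilon>0$, $(\mathfrak{ss}_e^{\varepsilon})^\perp$ is the least cardinality of a family $\mathcal A\subseteq\mathfrak S_{cc}$ such that there is no $X\in[\omega]^\omega_\omega$ for which, for every $\mathbf a\in\mathcal A$, $\sum_X\mathbf a$ converges to a limit in the open interval $(\sum\mathbf a-\varepsilon,\sum\mathbf a+\varepsilon)$. *)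

From HB Require Import structures.
From mathcomp Require Import all_boot all_order all_algebra.
From mathcomp Require Import all_classical all_reals all_analysis.
Set Implicit Arguments. Unset Strict Implicit. Unset Printing Implicit Defensive.
Import Order.TTheory GRing.Theory Num.Theory.
Import numFieldNormedType.Exports.
Local Open Scope classical_set_scope.
Local Open Scope ring_scope.

Section Defs.
Variable R : realType.

Definition rseq (a : nat -> rat) : R^nat := fun n => ratr (a n).

Definition Scc : set (nat -> rat) :=
  [set a | (rseq a n @[n --> \oo] --> (0 : R))
         /\ cvgn (series (rseq a))
         /\ (series (fun n => Num.max (rseq a n) 0) @ \oo --> +oo)
         /\ (series (fun n => Num.min (rseq a n) 0) @ \oo --> -oo)].

Definition inf_coinf (X : set nat) : Prop :=
  infinite_set X /\ infinite_set (~` X).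

Definition incr_enum (X : set nat) (e : nat -> nat) : Prop :=
  (forall n m, (n < m)%N -> (e n < e m)%N) /\ range e = X.

Definition sumX_to (X : set nat) (a : nat -> rat) (l : R) : Prop :=
  exists e, incr_enum X e /\ (series (fun n => rseq a (e n)) @ \oo --> l).

Definition good_for (eps : R) (A : set (nat -> rat)) (X : set nat) : Prop :=
  forall a, A a -> exists l, sumX_to X a l /\
     `| l - limn (series (rseq a)) | < eps.

End Defs.

(* Finite families: all their series have terms below eps / 2^(k+2) from a
   common index N k on.  Delete from omega an increasing sequence of even
   indices s_k >= N k; what remains is infinite (it keeps every odd number) and
   coinfinite, and each series loses an absolutely summable part of total at
   most eps / 2, so its sum over the remaining set is within eps of its sum.
   A countable family: with b the alternating harmonic series and M > 2 eps,
   the sequences b + i M delta_i are conditionally convergent with sums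
   (sum b) + i M.  A coinfinite X misses some i > 0; the sums over X of the
   0-th and of the i-th sequence then coincide, while their full sums are
   i M > 2 eps apart. *)
From HB Require Import structures.
From mathcomp Require Import all_boot all_order all_algebra.
From mathcomp Require Import all_classical all_reals all_analysis.
From mathcomp Require Import lra zify.
Import Order.TTheory GRing.Theory Num.Theory.
Import numFieldNormedType.Exports.
Local Open Scope classical_set_scope.
Local Open Scope ring_scope.
Set Implicit Arguments. Unset Strict Implicit. Unset Printing Implicit Defensive.

Section IncreasingEnumeration.
Implicit Types (X : set nat) (e : nat -> nat).

Lemma homo_ltn_id_leq e : {homo e : n m / (n < m)%N} -> forall n, (n <= e n)%N.
Proof. by move=> e_incr; elim=> // n IHn; apply: leq_ltn_trans IHn (e_incr _ _ _). Qed.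

Lemma incr_enum_ltn X e n m : incr_enum X e -> (e n < e m)%N = (n < m)%N.
Proof. by move=> [/leq_mono/leqW_mono]. Qed.

Lemma incr_enum_leq X e e' n : incr_enum X e -> incr_enum X e' ->
  (forall k, (k < n)%N -> e k = e' k) -> (e' n <= e n)%N.
Proof.
move=> [e_incr eX] [/leq_mono e'_mono e'X] e_e'.
have [m _ e'm] : range e' (e n) by rewrite e'X -eX; exists n.
rewrite -e'm e'_mono leqNgt; apply/negP => mn.
have /(incn_inj (leq_mono e_incr)) nm : e n = e m by rewrite -e'm e_e'.
by rewrite nm ltnn in mn.
Qed.

Lemma incr_enum_unique X e e' : incr_enum X e -> incr_enum X e' -> e = e'.
Proof.
move=> eX e'X; apply/funext => n; elim/ltn_ind: n => n IHn.
apply/eqP; rewrite eqn_leq (incr_enum_leq eX e'X IHn) andbT.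
by apply: (incr_enum_leq e'X eX) => k /IHn.
Qed.

Lemma big_incr_enum (V : nmodType) X e (F : nat -> V) : incr_enum X e ->
  forall n, \sum_(k < n) F (e k) = \sum_(0 <= i < e n | `[< X i >]) F i.
Proof.
move=> eX; have [_ rng_e] := eX; have e_ltn := incr_enum_ltn _ _ eX.
have Xe i : `[< X i >] -> exists k, i = e k.
  by rewrite -rng_e => /asboolP[k _ <-]; exists k.
elim=> [|n IHn].
  rewrite big_ord0 big_nat_cond big1 // => i /andP[/andP[_ lti] /Xe[k ik]].
  by move: lti; rewrite ik e_ltn.
rewrite big_ord_recr /= IHn [RHS](@big_cat_nat _ _ _ (e n)) //=; last first.
  by rewrite ltnW ?e_ltn.
congr (_ + _); rewrite big_ltn_cond ?e_ltn // asboolT; last by rewrite -rng_e; exists n.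
rewrite big_nat_cond big1 ?addr0 // => i /andP[/andP[lt1 lt2] /Xe[k ik]].
move: lt1 lt2; rewrite ik !e_ltn ltnS.
by move=> /leq_trans/[apply]; rewrite ltnn.
Qed.

Lemma incr_enum_exists X : (forall m, exists2 x, X x & (m <= x)%N) ->
  exists e, incr_enum X e.
Proof.
move=> X_unbounded.
have X_ge m : exists x, `[< X x >] && (m <= x)%N.
  by have [x Xx mx] := X_unbounded m; exists x; rewrite mx asboolT.
pose next m := ex_minn (X_ge m).
have nextP m : [/\ X (next m), (m <= next m)%N &
    forall y, X y -> (m <= y)%N -> (next m <= y)%N].
  rewrite /next; case: ex_minnP => x /andP[/asboolP Xx mx] x_min.
  by split=> // y Xy my; apply: x_min; rewrite my asboolT.
(* e 0 is the least element of X, and e n.+1 the least one above e n. *)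
pose start n := if n is n'.+1 then (iter n' (next \o succn) (next 0)).+1 else 0%N.
pose e n := next (start n).
have startS n : start n.+1 = (e n).+1 by case: n.
have e_incr : {homo e : n m / (n < m)%N}.
  apply: homo_ltn => [? ? ? /ltn_trans/[apply] //| n].
  by rewrite /e startS; case: (nextP (e n).+1).
exists e; split=> //; apply/seteqP; split=> [_ [n _ <-]|x Xx].
  by case: (nextP (start n)).
have [|n x_le_en n_min] := ex_minnP (ex_intro (fun n => x <= e n)%N x _).
  exact: homo_ltn_id_leq.
have start_le_x : (start n <= x)%N.
  case: n x_le_en n_min => [//|n] _ n_min; rewrite startS ltnNge.
  by apply/negP => /n_min; rewrite ltnn.
exists n => //; apply/eqP; rewrite eqn_leq x_le_en andbT.
by case: (nextP (start n)) => _ _; apply.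
Qed.

Lemma infinite_range_inj (T : Type) (f : nat -> T) :
  injective f -> infinite_set (range f).
Proof.
move=> f_inj; apply/infiniteP; have := @inj_card_eq _ _ setT f (in2W f_inj).
by rewrite card_eq_sym card_eq_le => /andP[].
Qed.

Lemma unbounded_infinite X :
  (forall m, exists2 x, X x & (m <= x)%N) -> infinite_set X.
Proof.
move=> /incr_enum_exists[e [/leq_mono e_mono <-]].
exact/infinite_range_inj/incn_inj.
Qed.

End IncreasingEnumeration.

Definition sparse (N : nat -> nat) (k : nat) : nat := (\sum_(j < k.+1) (N j).+1).*2.

Lemma sparse_incr N : {homo sparse N : n m / (n < m)%N}.
Proof.
apply: homo_ltn => [? ? ? /ltn_trans/[apply] //|k].
by rewrite /sparse (big_ord_recr k.+1) /=; lia.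
Qed.

Lemma sparse_ge N k : (N k <= sparse N k)%N.
Proof. by rewrite /sparse big_ord_recr /=; lia. Qed.

Lemma odd_notin_sparse N n : ~ range (sparse N) n.*2.+1.
Proof. by move=> [k _ /(congr1 odd)]; rewrite /sparse odd_double /= odd_double. Qed.

Lemma near_forall_finite_set (U : Type) (T : eqType) (F : set_system U)
    (A : set T) (P : T -> U -> Prop) : Filter F -> finite_set A ->
  (forall a, A a -> \forall x \near F, P a x) ->
  \forall x \near F, forall a, A a -> P a x.
Proof.
move=> FF /finite_seqP [s ->] {A}; elim: s => [|a s IHs] Pnear.
  by apply: nearW => x b; rewrite /= in_nil.
have Pa := Pnear a (mem_head a s).
have Ps : \forall x \near F, forall b, b \in s -> P b x.
  by apply: IHs => b bs; apply: Pnear; rewrite /= in_cons bs orbT.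
apply: filterS2 Pa Ps => x Pax Psx b /=; rewrite in_cons.
by case/orP=> [/eqP-> //|]; apply: Psx.
Qed.

Section SeriesEventuallyEqual.
Variables (R : realType) (u u' : R^nat) (N : nat).
Hypothesis u'_u : forall k, (N <= k)%N -> u' k = u k.

Let c := \sum_(0 <= k < N) (u' k - u k).

Lemma series_eventually_eq n : (N <= n)%N -> series u' n = series u n + c.
Proof.
move=> Nn; rewrite !seriesEnat /= /c.
rewrite -[in LHS](subrK (\sum_(0 <= k < n) u k) (\sum_(0 <= k < n) u' k)).
rewrite addrC -sumrB; congr (_ + _).
rewrite (big_cat_nat (leq0n N) Nn) /= [X in _ + X]big_nat_cond [X in _ + X]big1 ?addr0 //.
by move=> k /andP[/andP[Nk _] _]; rewrite u'_u ?subrr.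
Qed.

Let near_series_eq : \forall n \near \oo, series u' n = series u n + c.
Proof.
by near=> n; apply: series_eventually_eq; near: n; apply: nbhs_infty_ge.
Unshelve. all: by end_near. Qed.

Lemma cvg_series_eventually_eq l :
  series u @ \oo --> l -> series u' @ \oo --> l + c.
Proof.
move=> u_l; apply: cvg_trans (cvgD u_l (cvg_cst c)).
by apply: near_eq_cvg; apply: filterS near_series_eq => n ->.
Qed.

Lemma cvgy_series_eventually_eq :
  series u @ \oo --> +oo -> series u' @ \oo --> +oo.
Proof.
move=> /cvgryPge u_y; apply/cvgryPge => A.
by apply: filterS2 (u_y (A - c)) near_series_eq => n; rewrite lerBlDr => + ->.
Qed.

Lemma cvgNy_series_eventually_eq :
  series u @ \oo --> -oo -> series u' @ \oo --> -oo.
Proof.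
move=> /cvgrNyPle u_Ny; apply/cvgrNyPle => A.
by apply: filterS2 (u_Ny (A - c)) near_series_eq => n; rewrite lerBrDr => + ->.
Qed.

End SeriesEventuallyEqual.

Section ConditionallyConvergent.
Variable R : realType.

Lemma Scc_eventually_eq (a a' : nat -> rat) N :
  (forall k, (N <= k)%N -> a' k = a k) -> Scc R a ->
  Scc R a' /\ limn (series (rseq R a')) =
    limn (series (rseq R a)) + \sum_(0 <= k < N) (rseq R a' k - rseq R a k).
Proof.
move=> a'_a [a0 [a_cvg [a_pos a_neg]]].
have ra'_ra k : (N <= k)%N -> rseq R a' k = rseq R a k by move=> Nk; rewrite /rseq a'_a.
have a'_cvg := cvg_series_eventually_eq ra'_ra a_cvg.
split; last exact: cvg_lim a'_cvg.
split; [|split; [exact: cvgP a'_cvg|split]].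
- apply: cvg_trans a0; apply: near_eq_cvg; near=> n.
  by rewrite ra'_ra //; near: n; apply: nbhs_infty_ge.
- by apply: cvgy_series_eventually_eq a_pos => k /ra'_ra ->.
- by apply: cvgNy_series_eventually_eq a_neg => k /ra'_ra ->.
Unshelve. all: by end_near. Qed.

Lemma cvgn_series_abs_bounded (v : R^nat) (B : R) :
  (forall m, \sum_(0 <= i < m) `|v i| <= B) ->
  cvgn (series v) /\ `|limn (series v)| <= B.
Proof.
move=> v_bound.
have abs_cvg : cvgn [normed series v].
  apply: nondecreasing_is_cvgn.
    by apply: (@nondecreasing_series _ _ xpredT 0%N) => *; apply: normr_ge0.
  by exists B => _ [n _ <-]; apply: v_bound.
split; first exact: normed_cvg.
apply: le_trans (lim_series_norm abs_cvg) _.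
by apply: limr_le => //; apply: nearW => n; apply: v_bound.
Qed.

Lemma sumX_to_setC (Y : set nat) (a : nat -> rat) (B : R) :
  cvgn (series (rseq R a)) -> (forall m, exists2 x, ~ Y x & (m <= x)%N) ->
  (forall m, \sum_(0 <= i < m | `[< Y i >]) `|rseq R a i| <= B) ->
  exists l, sumX_to (~` Y) a l /\ `|l - limn (series (rseq R a))| <= B.
Proof.
move=> a_cvg notY_unbounded Y_bound.
have [e eX] := incr_enum_exists notY_unbounded.
pose v i := if `[< Y i >] then rseq R a i else 0.
have [v_cvg v_le] : cvgn (series v) /\ `|limn (series v)| <= B.
  apply: cvgn_series_abs_bounded => m; rewrite (le_trans _ (Y_bound m)) //.
  rewrite [leRHS]big_mkcond /=; apply: ler_sum => i _.
  by rewrite /v; case: ifP; rewrite ?normr0.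
have e_cvg : e @ \oo --> \oo.
  apply/cvgnyPge => m; near=> n; apply: leq_trans (homo_ltn_id_leq eX.1 n).
  by near: n; apply: nbhs_infty_ge.
have series_e n :
    series (fun k => rseq R a (e k)) n = series (rseq R a) (e n) - series v (e n).
  apply/eqP; rewrite eq_sym subr_eq !seriesEnat /=.
  rewrite (big_mkord xpredT (fun k => rseq R a (e k))) (big_incr_enum _ eX).
  rewrite (bigID (fun i => `[< Y i >])) addrC /=; apply/eqP; congr (_ + _).
    by rewrite big_mkcond.
  by apply: eq_bigl => i; rewrite asbool_neg.
exists (limn (series (rseq R a)) - limn (series v)); split.
  exists e; split=> //; rewrite (funext series_e).
  by apply: cvgB; apply: cvg_comp e_cvg _.
by rewrite addrAC subrr add0r normrN.
Unshelve. all: by end_near. Qed.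

Lemma sumX_to_unique X (a a' : nat -> rat) (l l' : R) :
  (forall k, X k -> a k = a' k) -> sumX_to X a l -> sumX_to X a' l' -> l = l'.
Proof.
move=> a_a' [e [eX a_l]] [e' [e'X a'_l']].
rewrite -(incr_enum_unique eX e'X) in a'_l'.
have e_in_X n : X (e n) by case: eX => _ <-; exists n.
rewrite (_ : (fun n => _) = (fun n => rseq R a' (e n))) in a_l; last first.
  by apply/funext => n; rewrite /rseq a_a'.
by rewrite -(cvg_lim _ a_l) // -(cvg_lim _ a'_l').
Qed.

Lemma sum_sparse_le (u d : R^nat) N :
  (forall k n, (N k <= n)%N -> `|u n| <= d k) ->
  forall m, \sum_(0 <= i < m | `[< range (sparse N) i >]) `|u i| <= \sum_(k < m) d k.
Proof.
move=> u_small m.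
have m_le : (m <= sparse N m)%N := homo_ltn_id_leq (@sparse_incr N) m.
pose S n := \sum_(0 <= i < n | `[< range (sparse N) i >]) `|u i|.
apply: (@le_trans _ _ (S (sparse N m))).
  by rewrite /S [leRHS](big_cat_nat (leq0n m) m_le) /= lerDl sumr_ge0.
rewrite /S -(big_incr_enum _ (conj (@sparse_incr N) erefl)).
by apply: ler_sum => k _; apply: u_small; apply: sparse_ge.
Qed.

Lemma exists_good_for_finite (eps : R) (A : set (nat -> rat)) : 0 < eps ->
  A `<=` Scc R -> finite_set A -> exists X, inf_coinf X /\ good_for eps A X.
Proof.
move=> eps_gt0 A_Scc A_fin.
pose d := geometric (eps / 4) 2^-1.
have d_gt0 k : 0 < d k by rewrite /d /= mulr_gt0 ?exprn_gt0 ?divr_gt0.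
have A_small k :
    exists Nk, forall n, (Nk <= n)%N -> forall a, A a -> `|rseq R a n| <= d k.
  suff [Nk _ Nk_small] : \forall n \near \oo, forall a, A a -> `|rseq R a n| <= d k.
    by exists Nk => n /Nk_small.
  apply: near_forall_finite_set => // a /A_Scc[a0 _].
  by apply: filterS (cvgr_dist_le _ _ a0 _ (d_gt0 k)) => n; rewrite sub0r normrN.
have [N N_small] := choice A_small.
have notY_unbounded m : exists2 x, ~ range (sparse N) x & (m <= x)%N.
  by exists m.*2.+1; [apply: odd_notin_sparse | rewrite -addnn -addnS leq_addr].
exists (~` range (sparse N)); split.
  split; first exact: unbounded_infinite.
  rewrite setCK; apply: unbounded_infinite => m; exists (sparse N m); first by exists m.
  exact: homo_ltn_id_leq (@sparse_incr N) m.
move=> a /[dup] /A_Scc[_ [a_cvg _]] Aa.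
have [|l [X_l l_near]] := sumX_to_setC a_cvg notY_unbounded (B := eps / 2).
  move=> m; apply: le_trans (sum_sparse_le (fun k n Nk => N_small k n Nk a Aa) m) _.
  rewrite -(big_mkord xpredT) -/(series d m) (le_trans (geometric_le_lim _ _ _ _)) //.
  - by rewrite divr_ge0 ?ltW.
  - by rewrite ger0_norm ?invf_lt1 ?ltr1n.
  - by rewrite (_ : 1 - 2^-1 = 2^-1) ?invrK; lra.
exists l; split=> //; apply: le_lt_trans l_near _.
by rewrite ltr_pdivrMr // ltr_pMr // ltr1n.
Qed.

Definition alt_harmonic (n : nat) : rat :=
  if odd n then - (n./2.+1%:R)^-1 else (n./2.+1%:R)^-1.

Lemma rseq_alt_harmonic n :
  rseq R alt_harmonic n = if odd n then - harmonic n./2 else harmonic n./2.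
Proof. by rewrite /rseq /alt_harmonic; case: odd; rewrite ?rmorphN fmorphV rmorph_nat. Qed.

Lemma series_alt_harmonic n :
  series (rseq R alt_harmonic) n = if odd n then harmonic n./2 else 0.
Proof.
elim: n => [|n IHn]; first by rewrite seriesEnat /= big_geq.
rewrite seriesSr IHn rseq_alt_harmonic /= uphalf_half.
by case: (odd n) => /=; rewrite ?add0n ?subrr ?add0r.
Qed.

Lemma cvg_harmonic_half : harmonic n./2 @[n --> \oo] --> (0 : R).
Proof.
apply: cvg_comp cvg_harmonic; apply/cvgnyPge => A; near=> n.
by rewrite -(doubleK A) half_leq //; near: n; apply: nbhs_infty_ge.
Unshelve. all: by end_near. Qed.

Lemma cvgy_series_harmonic_pairs (u : R^nat) : (forall n, 0 <= u n) ->
  (forall j, u j.*2 + u j.*2.+1 = harmonic j) -> series u @ \oo --> +oo.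
Proof.
move=> u_ge0 u_pairs.
have series_double m : series u m.*2 = series harmonic m.
  elim: m => [|m IHm]; first by rewrite !seriesEnat /= !big_geq.
  by rewrite doubleS !seriesSr IHm -addrA u_pairs.
apply: nondecreasing_dvgn_lt.
  by move=> m n mn; rewrite !seriesEnat; apply: nondecreasing_series.
move=> u_cvg; apply: (@dvg_harmonic R).
have double_cvg : (fun n => n.*2) @ \oo --> \oo.
  apply/cvgnyPge => A; near=> n; rewrite -addnn (leq_trans _ (leq_addr _ _)) //.
  by near: n; apply: nbhs_infty_ge.
have := cvg_comp _ _ double_cvg u_cvg.
by rewrite (_ : _ \o _ = series harmonic) => [/cvgP|]; last exact/funext.
Unshelve. all: by end_near. Qed.

Lemma Scc_alt_harmonic : Scc R alt_harmonic.
Proof.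
split; [|split; [|split]].
- have harmonic_half_Ncvg : - harmonic n./2 @[n --> \oo] --> (0 : R).
    by rewrite -oppr0; apply: cvgN cvg_harmonic_half.
  apply: (squeeze_cvgr _ harmonic_half_Ncvg cvg_harmonic_half); near=> n.
  have h_ge0 := harmonic_ge0 (R := R) n./2.
  by rewrite rseq_alt_harmonic; case: odd; rewrite lexx ?andTb ?andbT; lra.
- apply/cvg_ex; exists 0; apply: (squeeze_cvgr _ (cvg_cst 0) cvg_harmonic_half).
  near=> n; rewrite series_alt_harmonic.
  by case: odd; rewrite lexx ?andbT ?harmonic_ge0.
- apply: cvgy_series_harmonic_pairs => [n|j]; first by rewrite le_max lexx orbT.
  rewrite !rseq_alt_harmonic /= odd_double /= uphalf_double doubleK.
  by rewrite max_l ?harmonic_ge0 // max_r ?addr0 // oppr_le0 harmonic_ge0.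
- apply/cvgNry; rewrite -seriesN; apply: cvgy_series_harmonic_pairs => [n|j] /=.
    by rewrite oppr_ge0 ge_min lexx orbT.
  rewrite !fctE !rseq_alt_harmonic /= odd_double /= uphalf_double doubleK.
  by rewrite min_r ?harmonic_ge0 // min_l ?oppr0 ?opprK ?add0r // oppr_le0 harmonic_ge0.
Unshelve. all: by end_near. Qed.

Definition spike (M i : nat) : nat -> rat :=
  fun k => alt_harmonic k + (if k == i then (i * M)%:R else 0).

Lemma Scc_spike M i : Scc R (spike M i) /\
  limn (series (rseq R (spike M i))) = limn (series (rseq R alt_harmonic)) + (i * M)%:R.
Proof.
have spike_eq k : (i.+1 <= k)%N -> spike M i k = alt_harmonic k.
  by rewrite /spike; case: eqP => [->|_]; rewrite ?ltnn ?addr0.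
have [Scc_spike ->] := Scc_eventually_eq spike_eq Scc_alt_harmonic.
split=> //; congr (_ + _); rewrite big_nat_recr //= big_nat_cond big1 ?add0r.
  by rewrite /rseq /spike eqxx rmorphD /= addrC addKr rmorph_nat.
by move=> k /andP[/andP[_ ki] _]; rewrite /rseq /spike (ltn_eqF ki) addr0 subrr.
Qed.

Lemma spike_inj M : (0 < M)%N -> injective (spike M).
Proof.
move=> M_gt0 i j spike_ij.
have := congr1 (fun f => f i) spike_ij; have := congr1 (fun f => f j) spike_ij.
rewrite /spike !eqxx [j == i]eq_sym; case: eqP => // _ /addrI/esym/eqP + /addrI/eqP.
by rewrite !pnatr_eq0 !muln_eq0 !(negbTE (lt0n_neq0 M_gt0)) !orbF => /eqP-> /eqP->.
Qed.

Lemma no_good_for_spikes (eps : R) M : eps *+ 2 < M%:R ->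
  ~ exists X, inf_coinf X /\ good_for eps (range (spike M)) X.
Proof.
move=> M_gt [X [[_ X_coinf] X_good]].
have [i [/= iX /eqP i_neq0]] : (~` X `\` [set 0%N]) !=set0.
  by apply/infinite_setN0/infinite_setD => //; apply: finite_set1.
have [l0 [X_l0 l0_near]] := X_good _ (imageT _ 0%N).
have [li [X_li li_near]] := X_good _ (imageT _ i).
have l0_li : l0 = li.
  apply: sumX_to_unique X_l0 X_li => k Xk; rewrite /spike mul0n if_same.
  by case: eqP => [ki|]; [rewrite ki in Xk | rewrite addr0].
move: l0_near li_near; rewrite -l0_li (Scc_spike M 0).2 (Scc_spike M i).2 mul0n addr0.
have : M%:R <= (i * M)%:R :> R by rewrite ler_nat leq_pmull // lt0n.
move: M_gt; rewrite mulr2n !ltr_norml.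
by move=> ? ? /andP[? ?] /andP[? ?]; lra.
Qed.

Lemma exists_countable_no_good_for (eps : R) : 0 < eps ->
  exists A : set (nat -> rat), A `<=` Scc R /\ (A #= [set: nat])%card /\
     ~ (exists X, inf_coinf X /\ good_for eps A X).
Proof.
move=> eps_gt0; pose M := Num.Def.archi_bound (eps *+ 2).
have eps2_ge0 : 0 <= eps *+ 2 by rewrite mulrn_wge0 // ltW.
have M_gt : eps *+ 2 < M%:R by apply: archi_boundP.
have M_gt0 : (0 < M)%N by rewrite -(ltr_nat R); apply: le_lt_trans M_gt.
exists (range (spike M)); split; first by move=> _ [i _ <-]; case: (Scc_spike M i).
split; last exact: no_good_for_spikes.
by apply: inj_card_eq; apply: in2W; apply: spike_inj.
Qed.

End ConditionallyConvergent.

Theorem mainTheorem13 (R : realType) (eps : R) (heps : 0 < eps) :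
  (forall A : set (nat -> rat), A `<=` Scc R -> finite_set A ->
     exists X : set nat, inf_coinf X /\ good_for eps A X)
  /\
  (exists A : set (nat -> rat), A `<=` Scc R /\ (A #= [set: nat])%card /\
     ~ (exists X : set nat, inf_coinf X /\ good_for eps A X)).
Proof.
split; first by move=> A; apply: exists_good_for_finite.
exact: exists_countable_no_good_for.
Qed.
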